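(* Let $q\ge2$ be an integer. (1) Let $\alpha\in\mathbb{R}\setminus\mathbb{Q}$. For every $k\in\mathbb{N}$ and every intervals $I_0,\dots,I_{k-1}\subset[0,1)$ of positive length, there exist $n\in\mathbb{N}_0$ and $m\in\mathbb{N}$ such that $\alpha s_q(n+jm)\bmod 1\in I_j$ for all $0\le j<k$. (2) Let $Q\in\mathbb{N}$ be coprime to $q-1$. For every $k\in\mathbb{N}$ and every $r_0,\dots,r_{k-1}\in\{0,1,\dots,Q-1\}$ there exist $n\in\mathbb{N}_0$ and $m\in\mathbb{N}$ such that $s_q(n+jm)\equiv r_j\pmod Q$ for all $0\le j<k$. Moreover, in both (1) and (2), with all parameters other than $N$ fixed, the number of pairs $(n,m)$ such that the progression $n,n+m,\dots,n+(k-1)m$ is contained in $\{0,1,\dots,N-1\}$ and has the stated property is $\asymp N^2$ as $N\to\infty$ (i.e. bounded above and below by positive constant multiples of $N^2$ for all large $N$).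
   Context: $s_q(n)$ denotes the sum of the digits of $n$ in its base-$q$ expansion. $\mathbb{N}=\{1,2,\dots\}$, $\mathbb{N}_0=\mathbb{N}\cup\{0\}$. *)

From HB Require Import structures.
From mathcomp Require Import all_boot all_order all_algebra.
From mathcomp Require Import reals.
Set Implicit Arguments. Unset Strict Implicit. Unset Printing Implicit Defensive.
Import Order.TTheory GRing.Theory Num.Theory.

(* sum of base-q digits: s_q(n) (fuel n suffices since n %/ q < n for q >= 2) *)
Fixpoint sdig_aux (q fuel n : nat) : nat :=
  match fuel with
  | 0 => 0
  | f.+1 => if n == 0 then 0 else n %% q + sdig_aux q f (n %/ q)
  end.
Definition sdig (q n : nat) : nat := sdig_aux q n n.

Local Open Scope ring_scope.

Definition fracpart {R : realType} (x : R) : R := x - (Num.floor x)%:~R.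

Definition in_intv {R : realType} (a b : R) (ca cb : bool) (x : R) : bool :=
  ((a < x) || (ca && (x == a))) && ((x < b) || (cb && (x == b))).

Local Close Scope ring_scope.

Definition count_pairs (N k : nat) (P : nat -> nat -> bool) : nat :=
  #|[set p : 'I_N * 'I_N |
      [&& 0 < (p.2 : nat), (p.1 : nat) + (k - 1) * p.2 < N & P p.1 p.2]]|.

From HB Require Import structures.
From mathcomp Require Import all_boot all_order all_algebra.
From mathcomp Require Import reals.
From mathcomp Require Import zify ring lra.
Import Order.TTheory GRing.Theory Num.Theory.

(* Digit sums add over blocks of digits: s_q(b q^T + a) = s_q(b) + s_q(a) when
   a < q^T.  So if (n, m) realises the vector (s_q(n + j m))_(j<k) within L
   digits and (n', m') realises v' within L' digits, then
   (n q^L' + n', m q^L' + m') realises v + v'.  The progressions starting at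
   q^L - i with difference 1 realise "blocks" that gain (q - 1)[j < i] when L
   grows by one.  Four blocks with suitable multiplicities change only the p-th
   coordinate, by a prescribed amount: exactly modulo Q (using an inverse of
   q - 1 mod Q), resp. approximately modulo 1 after multiplication by alpha
   (using the density of the multiples of alpha and alpha (q - 1) mod 1).
   Summing over p yields a fixed number B of leading digits that turn any lower
   digit block (x, y) into a progression with the required property, and the
   lower blocks below N / q^(B + k + 1) give >= c N^2 such pairs below N. *)

Set Implicit Arguments.
Unset Strict Implicit.
Unset Printing Implicit Defensive.

Section DigitSum.
Variable q : nat.
Hypothesis hq : 2 <= q.

Lemma sdig_aux_fuel f f' n : n <= f -> n <= f' -> sdig_aux q f n = sdig_aux q f' n.
Proof.
elim: f f' n => [|f IH] [|f'] n //=; rewrite ?leqn0.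
- by move=> /eqP -> _.
- by move=> _ /eqP ->.
move=> hf hf'; case: eqP => // /eqP n0.
have hlt : n %/ q < n by rewrite ltn_Pdiv // lt0n.
by rewrite (IH f'); lia.
Qed.

Lemma sdigE n : sdig q n = n %% q + sdig q (n %/ q).
Proof.
rewrite /sdig; case: n => [|n] /=; first by rewrite div0n mod0n.
have hlt : n.+1 %/ q < n.+1 by rewrite ltn_Pdiv.
by congr (_ + _); apply: sdig_aux_fuel; lia.
Qed.

Lemma sdig_small n : n < q -> sdig q n = n.
Proof. by move=> h; rewrite sdigE divn_small // modn_small // addn0. Qed.

Lemma sdig_leq n : sdig q n <= n.
Proof.
elim/ltn_ind: n => -[|n] IH //; rewrite sdigE.
have hlt : n.+1 %/ q < n.+1 by rewrite ltn_Pdiv.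
rewrite [leqRHS](divn_eq _ q) addnC leq_add2r.
apply: leq_trans (IH _ hlt) _; rewrite leq_pmulr //; lia.
Qed.

Lemma sdig_concat T b a : a < q ^ T -> sdig q (b * q ^ T + a) = sdig q b + sdig q a.
Proof.
elim: T a => [|T IH] a ha.
  by move: ha; rewrite expn0 ltnS leqn0 muln1 => /eqP ->; rewrite addn0 -[sdig q 0]/0 addn0.
have q0 : 0 < q by lia.
rewrite expnSr mulnA sdigE [sdig q a]sdigE modnMDl divnMDl //.
rewrite IH; first by rewrite addnCA.
by rewrite ltn_divLR // -expnSr.
Qed.

Lemma sdig_progression_split T k x y n m j : x + k * y < q ^ T -> j <= k ->
  sdig q (n * q ^ T + x + j * (m * q ^ T + y)) = sdig q (n + j * m) + sdig q (x + j * y).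
Proof.
move=> hxy hj.
have -> : n * q ^ T + x + j * (m * q ^ T + y) = (n + j * m) * q ^ T + (x + j * y).
  by rewrite mulnDl mulnDr mulnA; lia.
rewrite sdig_concat //; apply: leq_ltn_trans hxy.
by rewrite leq_add2l leq_mul2r hj orbT.
Qed.

End DigitSum.

Section Patterns.
Variables q k : nat.
Hypothesis hq : 2 <= q.

(* [mpos] is a flag rather than a fixed demand m > 0 because the zero vector is
   only realised with m = 0. *)
Definition pattern (L : nat) (mpos : bool) (v : nat -> nat) :=
  exists n m, (mpos -> 0 < m) /\ n + k * m < q ^ L /\
    forall j, j < k -> sdig q (n + j * m) = v j.

Lemma pattern_mono L L' mpos v : L <= L' -> pattern L mpos v -> pattern L' mpos v.
Proof.
move=> hL [n [m [hm [hlt hv]]]]; exists n, m; split=> //; split=> //.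
by apply: leq_trans hlt _; rewrite leq_pexp2l //; lia.
Qed.

Lemma eq_pattern L mpos v w : (forall j, j < k -> v j = w j) ->
  pattern L mpos v -> pattern L mpos w.
Proof.
by move=> hvw [n [m [hm [hlt hv]]]]; exists n, m; split=> //; split=> // j hj; rewrite hv ?hvw.
Qed.

Lemma pattern0 : pattern 0 false (fun=> 0).
Proof. by exists 0, 0; split=> //; split=> [|j _]; rewrite muln0. Qed.

Lemma patternD L1 L2 mpos1 mpos2 v1 v2 :
  pattern L1 mpos1 v1 -> pattern L2 mpos2 v2 ->
  pattern (L1 + L2) (mpos1 || mpos2) (fun j => v1 j + v2 j).
Proof.
move=> [n1 [m1 [hm1 [hlt1 hv1]]]] [n2 [m2 [hm2 [hlt2 hv2]]]].
have hQ : 0 < q ^ L2 by rewrite expn_gt0; lia.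
exists (n1 * q ^ L2 + n2), (m1 * q ^ L2 + m2); split; last split.
- case: mpos1 hm1 => [/(_ isT) h1 _|_ /= /hm2 h2]; last lia.
  by rewrite ltn_addr // muln_gt0 h1.
- have -> : n1 * q ^ L2 + n2 + k * (m1 * q ^ L2 + m2) =
            (n1 + k * m1) * q ^ L2 + (n2 + k * m2) by rewrite mulnDl mulnDr mulnA; lia.
  rewrite expnD; apply: leq_trans (_ : (n1 + k * m1).+1 * q ^ L2 <= _).
    by rewrite mulSn addnC ltn_add2r.
  by rewrite leq_mul2r hlt1 orbT.
- move=> j hj; rewrite (sdig_progression_split hq _ _ hlt2) ?hv1 ?hv2 //; exact: ltnW.
Qed.

Lemma patternMn c L mpos v : pattern L mpos v ->
  pattern (c * L) (mpos && (0 < c)) (fun j => c * v j).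
Proof.
move=> hv; elim: c => [|c IH].
  by rewrite andbF; apply: eq_pattern pattern0 => j _.
have -> : mpos && (0 < c.+1) = mpos || mpos && (0 < c) by case: (mpos).
by rewrite mulSn; apply: eq_pattern (patternD hv IH) => j _; rewrite mulSn.
Qed.

Lemma pattern_weaken L mpos v : pattern L mpos v -> pattern L false v.
Proof. by move=> [n [m [_ hv]]]; exists n, m. Qed.

Lemma pattern_sum L n (U : 'I_n -> nat -> nat) :
  (forall p, pattern L true (U p)) ->
  pattern (n * L) (0 < n) (fun j => \sum_(p < n) U p j).
Proof.
elim: n U => [|n IH] U hU.
  by apply: eq_pattern pattern0 => j _; rewrite big_ord0.
have := patternD (IH (fun p => U (widen_ord (leqnSn n) p)) (fun p => hU _)) (hU ord_max).
rewrite orbT -mulSnr; apply: eq_pattern => j _.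
by rewrite big_ord_recr.
Qed.

Definition block L i j := sdig q (q ^ L - i + j).

Lemma pattern_block L i : i <= k -> k < q ^ L -> pattern L.+1 true (block L i).
Proof.
move=> hi hL; exists (q ^ L - i), 1; split=> //; split; last by move=> j _; rewrite muln1.
rewrite expnS muln1; have : 2 * q ^ L <= q * q ^ L by rewrite leq_mul2r hq orbT.
lia.
Qed.

(* For j < i the extra leading digit of q^(L+1) - i + j is q - 1; for j >= i
   both numbers are a power of q plus j - i. *)
Lemma block_succ L i j : i <= k -> j < k -> k < q ^ L ->
  block L.+1 i j = block L i j + (q - 1) * (j < i).
Proof.
move=> hi hj hL; rewrite /block; have hqL : q ^ L <= q ^ L.+1 by rewrite leq_pexp2l //; lia.
case: (ltnP j i) => hji.
  have -> : q ^ L.+1 - i + j = (q - 1) * q ^ L + (q ^ L - i + j).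
    by move: hqL; rewrite expnS mulnBl mul1n; lia.
  have hq1 : q - 1 < q by lia.
  by rewrite muln1 [RHS]addnC sdig_concat ?(sdig_small hq hq1) //; lia.
have -> : q ^ L.+1 - i + j = 1 * q ^ L.+1 + (j - i) by lia.
have -> : q ^ L - i + j = 1 * q ^ L + (j - i) by lia.
by rewrite muln0 addn0 !sdig_concat //; lia.
Qed.

(* The coefficients c1 + c3 and c2 + c4 of the block values are later chosen to
   make them negligible, leaving the carry term that is supported on j <= p. *)
Lemma pattern_bump p c1 c2 c3 c4 : p < k -> 0 < c3 ->
  pattern ((c1 + c2 + c3 + c4) * k.+2) true (fun j =>
    (c1 + c3) * block k p.+1 j + (c2 + c4) * block k p j +
    (q - 1) * (c1 * (j <= p) + c2 * (j < p))).
Proof.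
move=> hp hc3; have hk : k < q ^ k by rewrite ltn_expl //; lia.
have hk1 : k < q ^ k.+1 by apply: leq_trans hk _; rewrite leq_pexp2l //; lia.
have := patternD (patternD (patternD
  (pattern_weaken (patternMn c1 (pattern_block hp hk1)))
  (patternMn c3 (pattern_block hp hk)))
  (pattern_weaken (patternMn c2 (pattern_block (ltnW hp) hk1))))
  (pattern_weaken (patternMn c4 (pattern_block (ltnW hp) hk))).
rewrite hc3 /= => /(pattern_mono (L' := (c1 + c2 + c3 + c4) * k.+2)) hpat.
apply: eq_pattern (hpat _) => [j hj|]; last by rewrite !mulnDl; lia.
rewrite !block_succ // ?(ltnW hp) //; ring.
Qed.

Lemma corrector_lift (G : nat -> nat -> bool) B :
  (forall u : nat -> nat, exists V, pattern B true V /\ forall j, j < k -> G j (V j + u j)) ->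
  forall T x y, x + k * y < q ^ T -> exists n m, 0 < m /\ n + k * m < q ^ B /\
    [forall j : 'I_k, G j (sdig q ((n * q ^ T + x) + j * (m * q ^ T + y)))].
Proof.
move=> hcorr T x y hxy.
have [V [[n [m [hm [hlt hV]]]] hG]] := hcorr (fun j => sdig q (x + j * y)).
exists n, m; split; first exact: hm.
split=> //; apply/forallP => j; have hj := ltn_ord j.
by rewrite (sdig_progression_split hq _ _ hxy) ?hV ?hG // ltnW.
Qed.

End Patterns.

Section Counting.
Variables (q k : nat) (P : nat -> nat -> bool).
Hypotheses (hq : 2 <= q) (hk : 0 < k).

Lemma count_pairs_leq N : count_pairs N k P <= N ^ 2.
Proof. by apply: leq_trans (max_card _) _; rewrite card_prod card_ord mulnn. Qed.

Lemma count_pairs_geq_inj N M (g : 'I_M * 'I_M -> nat * nat) : injective g ->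
  (forall i, [&& 0 < (g i).2, (g i).1 + k * (g i).2 < N & P (g i).1 (g i).2]) ->
  M * M <= count_pairs N k P.
Proof.
case: N => [|N] ginj hg.
  by case: M g ginj hg => [|M] g _ hg //; have /and3P [] := hg (ord0, ord0).
pose h i : 'I_N.+1 * 'I_N.+1 := (inord (g i).1, inord (g i).2).
have hbound i : (g i).1 < N.+1 /\ (g i).2 < N.+1.
  by have /and3P [_ hlt _] := hg i; split; nia.
have hhE i : (nat_of_ord (h i).1, nat_of_ord (h i).2) = g i.
  by case: (hbound i) => h1 h2; rewrite /= !inordK //; case: (g i).
have hinj : injective h by move=> i j hij; apply: ginj; rewrite -hhE hij hhE.
have -> : M * M = #|h @: [set: 'I_M * 'I_M]|.
  by rewrite card_imset // cardsT card_prod card_ord.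
apply/subset_leq_card/subsetP => _ /imsetP [i _ ->]; rewrite inE.
case: (g i) (hhE i) (hg i) => n m [-> ->] /= /and3P [hm hlt ->].
have : (k - 1) * m <= k * m by rewrite leq_mul2r leq_subr orbT.
by rewrite hm andbT; lia.
Qed.

Variable B : nat.
Hypothesis hlift : forall T x y, x + k * y < q ^ T -> exists n m,
  0 < m /\ n + k * m < q ^ B /\ P (n * q ^ T + x) (m * q ^ T + y).

Lemma count_pairs_geq S T N : k < q ^ S -> q ^ (B + (S + T)) <= N ->
  q ^ T * q ^ T <= count_pairs N k P.
Proof.
move=> hS hN; set D := q ^ (S + T).
have hsmall (i : 'I_(q ^ T) * 'I_(q ^ T)) : i.1 + k * i.2 < D.
  have := ltn_ord i.1; have := ltn_ord i.2; rewrite /D expnD; nia.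
have hex (i : 'I_(q ^ T) * 'I_(q ^ T)) : exists nm : nat * nat,
    [&& 0 < nm.2, nm.1 + k * nm.2 < q ^ B & P (nm.1 * D + i.1) (nm.2 * D + i.2)].
  by have [n [m [? [? ?]]]] := hlift (hsmall i); exists (n, m); apply/and3P.
pose g i := let nm := xchoose (hex i) in (nm.1 * D + i.1, nm.2 * D + i.2).
apply: (count_pairs_geq_inj (g := g)).
  have hD (l : 'I_(q ^ T)) : l < D by apply: leq_trans (ltn_ord l) _; rewrite leq_pexp2l; lia.
  move=> [i1 i2] [j1 j2] /(congr1 (fun z => (z.1 %% D, z.2 %% D))).
  by rewrite /g /= !modnMDl !modn_small // => -[/val_inj-> /val_inj->].
move=> i; have /and3P [hm hlt hP] := xchooseP (hex i); rewrite /g /= hP andbT.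
have := hsmall i; move: hN; rewrite expnD -/D; nia.
Qed.

Lemma count_pairs_asymp (R : realType) :
  (exists n m, 0 < m /\ P n m) /\
  (exists c1 c2 : R, (0 < c1)%R /\ (0 < c2)%R /\ exists N0, forall N, N0 <= N ->
     (c1 * (N ^ 2)%:R <= (count_pairs N k P)%:R <= c2 * (N ^ 2)%:R)%R).
Proof.
split.
  have [n [m [hm [_ hP]]]] := @hlift 0 0 0 (ltac:(by rewrite muln0)).
  by exists n, m; move: hP; rewrite expn0 !muln1 !addn0.
(* For q^l <= N < q^(l+1) and T = l - (B + k), each of the q^T * q^T low parts
   extends to a good pair below N, and N < q^T * D. *)
pose D := q ^ (B + k).+1; have hD : 0 < D by rewrite expn_gt0; lia.
exists ((D ^ 2)%:R^-1)%R, 1%R; split; first by rewrite invr_gt0 ltr0n expn_gt0 hD.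
split=> //; exists (q ^ (B + k)) => N hN.
rewrite mul1r ler_nat count_pairs_leq andbT ler_pdivrMl; last by rewrite ltr0n expn_gt0 hD.
rewrite -natrM ler_nat.
have hl : B + k <= trunc_log q N by apply: trunc_log_max.
have hNl : N < q ^ (trunc_log q N).+1 by apply: trunc_log_ltn.
set T := trunc_log q N - (B + k).
have hTD : N <= q ^ T * D by rewrite -expnD; apply: ltnW; rewrite addnS subnK.
have hcount : q ^ T * q ^ T <= count_pairs N k P.
  apply: count_pairs_geq (ltn_expl _ hq) _.
  by rewrite addnA subnKC // trunc_logP //; lia.
apply: leq_trans (_ : (q ^ T * D) ^ 2 <= _); first by rewrite leq_exp2r.
by rewrite expnMn mulnC leq_mul2l -mulnn hcount orbT.
Qed.

End Counting.

Section Residues.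
Variables q k Q : nat.
Hypotheses (hq : 2 <= q) (hk : 0 < k) (hQ : 0 < Q) (hcop : coprime Q (q - 1)).

Lemma coprime_inv_mod : exists t, t * (q - 1) = 1 %[mod Q].
Proof.
have hq1 : 0 < q - 1 by lia.
have /(coprimeP _ hq1) [[u v] /= huv] : coprime (q - 1) Q by rewrite coprime_sym.
by exists u; rewrite (_ : u * (q - 1) = v * Q + 1) ?modnMDl //; lia.
Qed.

Lemma residue_bump p r : p < k -> exists2 U, pattern q k (Q.+1 * Q * k.+2) true U &
  forall j, j < k -> U j = (if p == j then r else 0) %[mod Q].
Proof.
(* c (q - 1) = r, while c1 + c3 = Q, c2 + c4 = Q c and c1 + c2 = Q c. *)
move=> hp; have [t ht] := coprime_inv_mod; set c := r * t %% Q.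
have hcQ : c < Q by rewrite ltn_mod.
have hc : c * (q - 1) = r %[mod Q] by rewrite modnMml -mulnA -modnMmr ht modnMmr muln1.
have hQc : 0 < Q - c by rewrite subn_gt0.
have /(pattern_mono hq (L' := Q.+1 * Q * k.+2)) hU :=
  @pattern_bump q k hq p c ((Q - 1) * c) (Q - c) c hp hQc.
have hQc1 : (Q - 1) * c + c = Q * c by rewrite -mulSnr subn1 prednK.
have hlen : c + (Q - 1) * c + (Q - c) + c <= Q.+1 * Q.
  rewrite [c + _]addnC hQc1 -addnA subnK ?(ltnW hcQ) //.
  by rewrite -mulnSr mulnC leq_mul2r ltnS (ltnW hcQ) orbT.
eexists; first by apply: hU; rewrite leq_mul2r hlen orbT.
move=> j hj /=; have e1 : c + (Q - c) = Q by rewrite subnKC // ltnW.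
rewrite e1 hQc1 -mulnA -mulnDr -modnDml modnMr add0n.
case: ltngtP => _ /=.
- by rewrite !muln1 [c + _]addnC hQc1 mulnCA modnMr mod0n.
- by rewrite !(muln0, addn0).
- by rewrite muln1 muln0 addn0 mulnC.
Qed.

Lemma residue_corrector : exists B, forall u : nat -> nat, exists V,
  pattern q k B true V /\ forall j, j < k -> V j = u j %[mod Q].
Proof.
exists (k * (Q.+1 * Q * k.+2)) => u.
have [U hU hUmod] := fin_all_exists2 (fun p : 'I_k => residue_bump (u p) (ltn_ord p)).
exists (fun j => \sum_(p < k) U p j); split; first by have := pattern_sum hq hU; rewrite hk.
move=> j hj; rewrite -modn_summ (eq_bigr _ (fun p _ => hUmod p j hj)) modn_summ.
by rewrite -big_mkcond big_ord1_eq hj.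
Qed.

End Residues.

Lemma residue_progressions (R : realType) q Q k (r : nat -> nat) :
  2 <= q -> 0 < Q -> coprime Q (q - 1) -> 0 < k ->
  let P n m := [forall j : 'I_k, sdig q (n + j * m) == r j %[mod Q]] in
  (exists n m, 0 < m /\ P n m) /\
  (exists c1 c2 : R, (0 < c1)%R /\ (0 < c2)%R /\ exists N0, forall N, N0 <= N ->
     (c1 * (N ^ 2)%:R <= (count_pairs N k P)%:R <= c2 * (N ^ 2)%:R)%R).
Proof.
move=> hq hQ hcop hk P; have [B hB] := residue_corrector hq hk hQ hcop.
apply: (@count_pairs_asymp q k P hq hk B).
apply: (corrector_lift hq (G := fun j s => s == r j %[mod Q])) => u.
have [V [hV hVmod]] := hB (fun j => r j + (Q - 1) * u j).
exists V; split=> // j hj; apply/eqP.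
rewrite -modnDml hVmod // modnDml -addnA -mulSnr subn1 prednK //.
by rewrite addnC mulnC modnMDl.
Qed.

Section ApproxModOne.
Variable R : realType.
Local Open Scope ring_scope.

Definition close_mod1 (x t d : R) := exists z : int, `|x - t - z%:~R| <= d.

Lemma eq_close_mod1 x t x' t' d : close_mod1 x t d -> x - t = x' - t' -> close_mod1 x' t' d.
Proof. by move=> [z hz] e; exists z; rewrite -e. Qed.

Lemma close_mod1_le x t d d' : d <= d' -> close_mod1 x t d -> close_mod1 x t d'.
Proof. by move=> hd [z hz]; exists z; apply: le_trans hd. Qed.

Lemma close_mod1_refl x : close_mod1 x x 0.
Proof. by exists 0; rewrite subrr subr0 normr0. Qed.

Lemma close_mod1D x1 t1 d1 x2 t2 d2 : close_mod1 x1 t1 d1 -> close_mod1 x2 t2 d2 ->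
  close_mod1 (x1 + x2) (t1 + t2) (d1 + d2).
Proof.
move=> [z1 h1] [z2 h2]; exists (z1 + z2); apply: le_trans (lerD h1 h2).
by rewrite intrD (_ : _ - _ - _ = x1 - t1 - z1%:~R + (x2 - t2 - z2%:~R)) ?ler_normD //; ring.
Qed.

Lemma close_mod1N x t d : close_mod1 x t d -> close_mod1 (- x) (- t) d.
Proof.
move=> [z hz]; exists (- z).
by rewrite (_ : - x - - t - (- z)%:~R = - (x - t - z%:~R)) ?normrN // intrN; ring.
Qed.

Lemma close_mod1Mn x d n : close_mod1 x 0 d -> close_mod1 (x * n%:R) 0 (d * n%:R).
Proof.
move=> [z hz]; exists (z * n%:Z); rewrite !subr0 in hz *.
by rewrite intrM -mulrBl normrM normr_nat ler_wpM2r.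
Qed.

Lemma close_mod1_sum n (x t : 'I_n -> R) d : (forall p, close_mod1 (x p) (t p) d) ->
  close_mod1 (\sum_(p < n) x p) (\sum_(p < n) t p) (n%:R * d).
Proof.
elim: n x t => [|n IH] x t hxt.
  by rewrite !big_ord0 mul0r; apply: close_mod1_refl.
rewrite !big_ord_recr /= -natr1 mulrDl mul1r.
by apply: close_mod1D (hxt _); apply: IH.
Qed.

Definition irrational (x : R) := forall r : rat, x != ratr r.

Lemma irrational_neq_int x n (z : int) : irrational x -> (0 < n)%N -> x * n%:R != z%:~R.
Proof.
move=> hx hn; apply: contraNneq (hx (z%:~R / n%:R)) => e.
by rewrite fmorph_div /= ratr_int ratr_nat -e mulfK // pnatr_eq0 -lt0n.
Qed.

Lemma irrationalMn x n : irrational x -> (0 < n)%N -> irrational (x * n%:R).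
Proof.
move=> hx hn r; apply: contraNneq (hx (r / n%:R)) => e.
by rewrite fmorph_div /= ratr_nat -e mulfK // pnatr_eq0 -lt0n.
Qed.

Lemma fracpart_itv (x : R) : 0 <= fracpart x < 1.
Proof. by have := floor_itv x; rewrite /fracpart intrD; lra. Qed.

Lemma truncn_eq_dist (x y : R) : 0 <= x -> 0 <= y -> Num.truncn x = Num.truncn y -> `|x - y| < 1.
Proof.
move=> hx hy e; have := truncn_itv hx; have := truncn_itv hy.
by rewrite e -natr1 ltr_norml; lra.
Qed.

Lemma dirichlet_approx (b d : R) : irrational b -> 0 < d ->
  exists (n : nat) (z : int), (0 < n)%N /\ 0 < `|b * n%:R - z%:~R| < d.
Proof.
(* Pigeonhole: two of the M + 1 values fracpart (b i) share a box of width 1/M < d. *)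
move=> hb hd; set M := Num.bound d^-1; have hM : (0 < M)%N by [].
have hMd : 1 < M%:R * d by rewrite -ltr_pdivrMr // mul1r archi_boundP // invr_ge0 ltW.
have hbox (x : R) : (Num.truncn (fracpart x * M%:R) < M)%N.
  have /andP [h0 h1] := fracpart_itv x.
  by rewrite truncn_lt_nat ?mulr_ge0 // gtr_pMl // ltr0n.
pose box (i : 'I_M.+1) : 'I_M := Ordinal (hbox (b * i%:R)).
have : ~~ injectiveb box by apply/injectiveP => /leq_card; rewrite !card_ord ltnn.
case/injectivePn => i [j hij /(congr1 val) /= hbij].
wlog hlt : i j hij hbij / (i < j)%N.
  move=> gen; case: (ltngtP i j) => h; first exact: gen i j hij hbij h.
    by rewrite eq_sym in hij; exact: gen j i hij (esym hbij) h.
  by move/val_inj: h hij => ->; rewrite eqxx.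
exists (j - i)%N, (Num.floor (b * j%:R) - Num.floor (b * i%:R)); split; first by rewrite subn_gt0.
rewrite normr_gt0 subr_eq0 irrational_neq_int ?subn_gt0 //=.
have -> : b * (j - i)%:R - (Num.floor (b * j%:R) - Num.floor (b * i%:R))%:~R =
    fracpart (b * j%:R) - fracpart (b * i%:R).
  by rewrite natrB ?(ltnW hlt) // intrB /fracpart; ring.
have /andP [hi0 _] := fracpart_itv (b * i%:R); have /andP [hj0 _] := fracpart_itv (b * j%:R).
have := truncn_eq_dist (mulr_ge0 hj0 (ler0n _ M)) (mulr_ge0 hi0 (ler0n _ M)) (esym hbij).
rewrite -mulrBl normrM normr_nat => hlt1.
by rewrite -(ltr_pM2r (_ : 0 < M%:R)) ?ltr0n // (lt_trans hlt1) // mulrC.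
Qed.

Lemma multiples_close (e d t : R) : 0 < e <= d ->
  exists c : nat, (c <= Num.truncn e^-1)%N /\ close_mod1 (c%:R * e) t d.
Proof.
move=> /andP [he hed]; have /andP [hs0 hs1] := fracpart_itv t.
have hse : 0 <= fracpart t / e by rewrite divr_ge0 // ltW.
exists (Num.truncn (fracpart t / e)); split.
  by apply: le_truncn; rewrite -[leRHS]mul1r ler_wpM2r ?invr_ge0 ?ltW.
have := truncn_itv hse; rewrite ler_pdivlMr // ltr_pdivrMr // -natr1.
move: (Num.truncn _) => c /andP [hc1 hc2]; exists (- Num.floor t).
rewrite intrN opprK ler_norml; move: hs0 hc1 hc2; rewrite /fracpart; nra.
Qed.

Lemma irrational_dense (b d : R) : irrational b -> 0 < d -> exists K : nat, forall t,
  exists c : nat, (0 < c <= K)%N /\ close_mod1 (b * c%:R) t d.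
Proof.
move=> hb hd; have [n [z [hn /andP [he0 hed]]]] := dirichlet_approx hb hd.
set e := b * n%:R - z%:~R in he0 hed.
have hmult t : exists c : nat, (c <= Num.truncn `|e|^-1)%N /\ close_mod1 (c%:R * e) t d.
  case: (ltrgt0P e) he0 hed => [hpos|hneg|_]; last by rewrite ltxx.
    by move=> _ hed; apply: multiples_close; rewrite hpos ltW.
  move=> _ hed; have [|c [hc hct]] := multiples_close (- t) (_ : 0 < - e <= d).
    by rewrite oppr_gt0 hneg ltW.
  by exists c; split=> //; apply: (eq_close_mod1 (close_mod1N hct)); ring.
exists (Num.truncn `|e|^-1 * n)%N.+1 => t; have [c [hc [w hw]]] := hmult (t - b).
exists (c * n)%N.+1; split; first by rewrite !ltnS leq_mul2r hc orbT.
exists (w + c%:Z * z); rewrite -natr1 natrM intrD intrM.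
by rewrite (_ : _ - _ - _ = c%:R * e - (t - b) - w%:~R) // /e; ring.
Qed.

Lemma in_intv_of_close (a b d x : R) ca cb : 0 <= a -> b <= 1 -> d * 2 < b - a ->
  close_mod1 x ((a + b) / 2) d -> in_intv a b ca cb (fracpart x).
Proof.
move=> ha hb hd [z]; rewrite ler_norml => /andP [hz1 hz2].
have hlo : a < x - z%:~R by lra.
have hhi : x - z%:~R < b by lra.
have hfl : Num.floor x = z by apply: floor_def; rewrite intrD; apply/andP; split; lra.
by rewrite /in_intv /fracpart hfl hlo hhi.
Qed.

Lemma finite_pos_lower_bound (f : nat -> R) n : (forall j, (j < n)%N -> 0 < f j) ->
  exists2 d, 0 < d & forall j, (j < n)%N -> d <= f j.
Proof.
elim: n => [|n IH] hf; first by exists 1.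
have [d hd hdf] := IH (fun j hj => hf j (ltnW hj)).
exists (Num.min d (f n)); first by rewrite lt_min hd hf.
move=> j; rewrite ltnS leq_eqVlt => /orP [/eqP -> | hj]; rewrite ge_min ?lexx ?orbT //.
by rewrite hdf.
Qed.

End ApproxModOne.

Section Rotation.
Variables (R : realType) (q k : nat) (alpha : R).
Hypotheses (hq : (2 <= q)%N) (hk : (0 < k)%N) (halpha : irrational alpha).
Local Open Scope ring_scope.

Lemma block_leq i j : (j < k)%N -> (block q k i j <= q ^ k + k)%N.
Proof. by move=> hj; apply: leq_trans (sdig_leq hq _) _; lia. Qed.

Lemma rotation_bump eps : 0 < eps -> exists L, forall p tau, (p < k)%N ->
  exists2 U, pattern q k L true U & forall j, (j < k)%N ->
    close_mod1 (alpha * (U j)%:R) (if p == j then tau else 0) eps.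
Proof.
move=> heps; set W : R := (q ^ k + k)%:R; set beta := alpha * (q - 1)%:R.
set e := eps / (2 * W + 1); have hW : 0 <= W by [].
have he : 0 < e by rewrite divr_gt0 //; lra.
have hq1 : (0 < q - 1)%N by lia.
have [K1 hK1] := irrational_dense (irrationalMn halpha hq1) he.
have [K2 hK2] := irrational_dense halpha he.
exists ((K1 + K1 + K2 + K2) * k.+2)%N => p tau hp.
(* beta c1 approximates tau, beta c2 cancels it for j < p, and c3, c4 make
   alpha (c1 + c3), alpha (c2 + c4) nearly integral. *)
have [c1 [/andP [_ hc1] h1]] := hK1 tau.
have [c2 [/andP [_ hc2] h2]] := hK1 (- (beta * c1%:R)).
have [c3 [/andP [hc30 hc3] h3]] := hK2 (- (alpha * c1%:R)).
have [c4 [/andP [_ hc4] h4]] := hK2 (- (alpha * c2%:R)).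
have hpat := @pattern_bump q k hq p c1 c2 c3 c4 hp hc30.
eexists; first by apply: pattern_mono hpat; rewrite // leq_mul2r; lia.
move=> j hj /=.
have hcancel (x : R) (c c' b' : nat) : (b' <= q ^ k + k)%N ->
    close_mod1 (x * c'%:R) (- (x * c%:R)) e -> close_mod1 (x * (c + c')%:R * b'%:R) 0 (e * W).
  move=> hb' hx; apply: close_mod1_le (close_mod1Mn _ (eq_close_mod1 hx _)).
    by apply: ler_wpM2l; [exact: ltW | rewrite /W ler_nat].
  by rewrite natrD; ring.
have n1 := hcancel _ _ _ _ (block_leq p.+1 hj) h3.
have n2 := hcancel _ _ _ _ (block_leq p hj) h4.
have n3 : close_mod1 (beta * (c1 * (j <= p) + c2 * (j < p))%:R) (if p == j then tau else 0) e.
  case: ltngtP => _ /=; rewrite /beta in h2 *.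
  - by apply: (eq_close_mod1 h2); rewrite !muln1 natrD; ring.
  - apply: close_mod1_le (ltW he) _.
    by apply: (eq_close_mod1 (close_mod1_refl 0)); rewrite !muln0; ring.
  - by apply: (eq_close_mod1 h1); rewrite muln1 muln0 addn0.
have -> : eps = e * W + e * W + e by rewrite /e; field; lra.
apply: (eq_close_mod1 (close_mod1D (close_mod1D n1 n2) n3)).
by rewrite !add0r; congr (_ - _); rewrite /beta !natrD !natrM; ring.
Qed.

Lemma rotation_corrector delta : 0 < delta -> exists B, forall t : nat -> R, exists V,
  pattern q k B true V /\ forall j, (j < k)%N -> close_mod1 (alpha * (V j)%:R) (t j) delta.
Proof.
move=> hd; have hk' : 0 < k%:R :> R by rewrite ltr0n.
have [L hL] := rotation_bump (divr_gt0 hd hk').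
exists (k * L)%N => t.
have [U hU hUclose] := fin_all_exists2 (fun p : 'I_k => hL p (t p) (ltn_ord p)).
exists (fun j => \sum_(p < k) U p j)%N; split; first by have := pattern_sum hq hU; rewrite hk.
move=> j hj; have := close_mod1_sum (fun p => hUclose p j hj).
rewrite -big_mkcond big_ord1_eq hj mulrC divfK ?gt_eqF // => /eq_close_mod1; apply.
by rewrite natr_sum mulr_sumr.
Qed.

End Rotation.

Lemma rotation_progressions (R : realType) q (alpha : R) k (a b : nat -> R) (ca cb : nat -> bool) :
  2 <= q -> irrational alpha -> 0 < k ->
  (forall j, j < k -> (0 <= a j)%R /\ (a j < b j)%R /\ (b j <= 1)%R) ->
  let P n m := [forall j : 'I_k,
    in_intv (a j) (b j) (ca j) (cb j) (fracpart (alpha * (sdig q (n + j * m))%:R))] in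
  (exists n m, 0 < m /\ P n m) /\
  (exists c1 c2 : R, (0 < c1)%R /\ (0 < c2)%R /\ exists N0, forall N, N0 <= N ->
     (c1 * (N ^ 2)%:R <= (count_pairs N k P)%:R <= c2 * (N ^ 2)%:R)%R).
Proof.
move=> hq halpha hk hab P.
have [|d hd hdf] := @finite_pos_lower_bound R (fun j => (b j - a j) / 3%:R)%R k.
  by move=> j /hab [_ [hlt _]]; rewrite divr_gt0 ?subr_gt0 ?ltr0n.
have [B hB] := rotation_corrector hq hk halpha hd.
apply: (@count_pairs_asymp q k P hq hk B).
apply: (corrector_lift hq
  (G := fun j s => in_intv (a j) (b j) (ca j) (cb j) (fracpart (alpha * s%:R)))) => u.
have [V [hV hVclose]] := hB (fun j => ((a j + b j) / 2%:R - alpha * (u j)%:R)%R).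
exists V; split=> // j hj; have [ha [hlt hb]] := hab j hj.
have hclose : close_mod1 (alpha * (V j + u j)%:R) ((a j + b j) / 2%:R) d.
  by apply: (eq_close_mod1 (hVclose j hj)); rewrite natrD; ring.
by apply: in_intv_of_close ha hb _ hclose; have := hdf j hj; lra.
Qed.

Local Open Scope ring_scope.

Theorem theoremD (R : realType) (q : nat) (hq : (2 <= q)%N) :
  (* (1) irrational rotation *)
  (forall (alpha : R), (forall r : rat, alpha != ratr r) ->
   forall (k : nat), (0 < k)%N ->
   forall (a b : nat -> R) (ca cb : nat -> bool),
   (forall j, (j < k)%N ->
      0 <= a j /\ a j < b j /\ b j <= 1 /\
      (forall x, in_intv (a j) (b j) (ca j) (cb j) x -> 0 <= x < 1)) ->
   let P := fun n m : nat =>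
     [forall j : 'I_k,
        in_intv (a j) (b j) (ca j) (cb j)
          (fracpart (alpha * (sdig q (n + j * m))%:R))] in
   (exists n m : nat, (0 < m)%N /\ P n m) /\
   (exists c1 c2 : R, 0 < c1 /\ 0 < c2 /\ exists N0 : nat, forall N : nat,
      (N0 <= N)%N ->
      c1 * (N ^ 2)%:R <= (count_pairs N k P)%:R <= c2 * (N ^ 2)%:R)) /\
  (* (2) residues modulo Q *)
  (forall (Q : nat), (0 < Q)%N -> coprime Q (q - 1) ->
   forall (k : nat), (0 < k)%N ->
   forall (r : nat -> nat), (forall j, (j < k)%N -> (r j < Q)%N) ->
   let P := fun n m : nat =>
     [forall j : 'I_k, sdig q (n + j * m) == r j %[mod Q]] in
   (exists n m : nat, (0 < m)%N /\ P n m) /\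
   (exists c1 c2 : R, 0 < c1 /\ 0 < c2 /\ exists N0 : nat, forall N : nat,
      (N0 <= N)%N ->
      c1 * (N ^ 2)%:R <= (count_pairs N k P)%:R <= c2 * (N ^ 2)%:R)).
Proof.
split=> [alpha halpha k hk a b ca cb hab | Q hQ hcop k hk r _].
  apply: rotation_progressions => // j /hab [ha [hlt [hb _]]]; split=> //.
exact: residue_progressions.
Qed.
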